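(* Let $\Bbbk$ be a unital ring and $n,r$ positive integers. Then $\Phi_{n,r}:\Bbbk W_n\to\operatorname{End}_\Bbbk(\mathbf V^{\otimes r})$ is faithful when $n-1\le r$, and $\Phi_{n,r+1/2}:\Bbbk W_{n-1}\to\operatorname{End}_\Bbbk(\mathbf V^{\otimes r}\otimes\mathbf v_n)$ is faithful when $n-2\le r$.
   Context: $\mathbf V$ is a free $\Bbbk$-module with basis $\mathbf v_1,\dots,\mathbf v_n$. $W_n$ is the symmetric group on $\{1,\dots,n\}$ acting on $\mathbf V^{\otimes r}$ by $w(\mathbf v_{j_1}\otimes\cdots\otimes\mathbf v_{j_r})=\mathbf v_{w(j_1)}\otimes\cdots\otimes\mathbf v_{w(j_r)}$ extended linearly; $\Phi_{n,r}$ is the resulting representation. $W_{n-1}=\{w\in W_n:w(n)=n\}$ preserves $\mathbf V^{\otimes r}\otimes\mathbf v_n\subset\mathbf V^{\otimes(r+1)}$, and $\Phi_{n,r+1/2}$ is the resulting representation. *)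

From HB Require Import structures.
From mathcomp Require Import all_boot all_order all_algebra all_fingroup.
Set Implicit Arguments. Unset Strict Implicit. Unset Printing Implicit Defensive.
Import GRing.Theory.
Local Open Scope ring_scope.

(* Basis of V^{(x) r}: v_{j 0} (x) ... (x) v_{j (r-1)}, indexed by j : 'I_r -> 'I_n. *)
Definition tens (n r : nat) := {ffun 'I_r -> 'I_n}.

Definition act (n r : nat) (w : {perm 'I_n}) (j : tens n r) : tens n r :=
  [ffun k => w (j k)].

(* An element a = \sum_w a_w w of the group ring k W_n, given by its coefficients. *)
(* Phi_{n,r}(a) as a k-endomorphism of V^{(x) r}, recorded on the basis:
   Phi a j i = coefficient of basis vector i in Phi(a)(basis vector j)
             = \sum_{w | w . j = i} a_w. *)
Definition Phi (R : pzRingType) (n r : nat) (a : {ffun {perm 'I_n} -> R})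
  : {ffun tens n r -> {ffun tens n r -> R}} :=
  [ffun j => [ffun i => \sum_(w : {perm 'I_n} | act w j == i) a w]].

Definition vlast (n : nat) (hn : (0 < n)%N) : 'I_n :=
  Ordinal (etrans (ltn_predL n) hn).

(* basis of V^{(x) r} (x) v_n inside V^{(x) (r+1)} *)
Definition ext (n r : nat) (vn : 'I_n) (j : tens n r) : tens n r.+1 :=
  [ffun k : 'I_r.+1 => if unlift ord_max k is Some k' then j k' else vn].

(* Phi_{n,r+1/2}(a): restriction of Phi_{n,r+1}(a) to V^{(x) r} (x) v_n,
   recorded on the basis (ext j)_j of that subspace. *)
Definition PhiHalf (R : pzRingType) (n r : nat) (hn : (0 < n)%N)
  (a : {ffun {perm 'I_n} -> R}) : {ffun tens n r -> {ffun tens n r -> R}} :=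
  [ffun j => [ffun i => Phi r.+1 a (ext (vlast hn) j) (ext (vlast hn) i)]].

(* the group ring k W_{n-1}, W_{n-1} = stabilizer of n, as a subset of k W_n *)
Definition in_kWn1 (R : pzRingType) (n : nat) (hn : (0 < n)%N)
  (a : {ffun {perm 'I_n} -> R}) : Prop :=
  forall w : {perm 'I_n}, w (vlast hn) != vlast hn -> a w = 0.

From Pilot Require Import Defs.
From mathcomp Require Import all_boot all_order all_algebra all_fingroup.
From mathcomp Require Import zify.
Set Implicit Arguments. Unset Strict Implicit.

(* A permutation is determined by its values off a single point.  Hence if the
   indices of a basis tensor J take every value but at most one, the tensors
   w . J are pairwise distinct, and the coefficient of w . J in Phi(a)(J) is
   exactly a_w.  The tensor (v_1, ..., v_r) misses at most v_n when n - 1 <= r,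
   and (v_1, ..., v_r, v_n) misses at most v_{n-1} when n - 2 <= r; for the
   second map, elements of W_{n-1} fix v_n, so they commute with appending it. *)

Lemma perm_eq_off1 (T : finType) (y : T) (w w' : {perm T}) :
  {in predC1 y, w =1 w'} -> w = w'.
Proof.
move=> eq_off; apply/permP => x; case: (eqVneq x y) => [->|/eq_off//].
have [z wz] : exists z, w z = w' y by exists ((w^-1)%g (w' y)); rewrite permKV.
case: (eqVneq z y) wz => [-> //|nzy wz].
by move: (eq_off z nzy); rewrite wz => /perm_inj yz; rewrite yz eqxx in nzy.
Qed.

Section CoveringTensor.

Variables (n m : nat) (J : tens n m) (y : 'I_n).
Hypothesis coverJ : {subset predC1 y <= codom J}.

Lemma act_inj_cover : injective (fun w : {perm 'I_n} => Defs.act w J).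
Proof.
move=> w w' /ffunP eqJ; apply: (@perm_eq_off1 _ y) => x /coverJ /codomP [k ->].
by move: (eqJ k); rewrite !ffunE.
Qed.

Lemma Phi_act_cover (R : pzRingType) (a : {ffun {perm 'I_n} -> R}) w :
  Phi m a J (Defs.act w J) = a w.
Proof.
rewrite !ffunE (big_pred1 w) // => w'.
by apply/eqP/eqP => [/act_inj_cover|->].
Qed.

Lemma Phi_inj_cover (R : pzRingType) (a b : {ffun {perm 'I_n} -> R}) :
  Phi m a = Phi m b -> a = b.
Proof.
move=> eqPhi; apply/ffunP => w.
by rewrite -(Phi_act_cover a w) -(Phi_act_cover b w) eqPhi.
Qed.

End CoveringTensor.

Lemma ext_act (n m : nat) (vn : 'I_n) (w : {perm 'I_n}) (j : tens n m) :
  w vn = vn -> ext vn (Defs.act w j) = Defs.act w (ext vn j).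
Proof.
move=> wvn; apply/ffunP => k.
by rewrite !ffunE; case: unlift => [k'|]; rewrite ?ffunE.
Qed.

Lemma codom_ext (n m : nat) (vn : 'I_n) (j : tens n m) :
  {subset [predU1 vn & codom j] <= codom (ext vn j)}.
Proof.
move=> x /predU1P [->|/codomP [k ->]]; apply/codomP.
  by exists ord_max; rewrite ffunE unlift_none.
by exists (lift ord_max k); rewrite ffunE liftK.
Qed.

Lemma PhiHalf_inj_cover (R : pzRingType) (n m : nat) (hn : 0 < n)
    (J : tens n m) (y : 'I_n) (a b : {ffun {perm 'I_n} -> R}) :
  {subset predC1 y <= codom (ext (vlast hn) J)} ->
  in_kWn1 hn a -> in_kWn1 hn b -> PhiHalf m hn a = PhiHalf m hn b -> a = b.
Proof.
move=> coverJ Ha Hb eqPhi; apply/ffunP => w.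
have [fix_vn|move_vn] := eqVneq (w (vlast hn)) (vlast hn); last first.
  by rewrite (Ha _ move_vn) (Hb _ move_vn).
have PhiHalf_act (c : {ffun {perm 'I_n} -> R}) :
    PhiHalf m hn c J (Defs.act w J) = c w.
  by rewrite !ffunE ext_act // -[RHS](Phi_act_cover coverJ c w) !ffunE.
by rewrite -PhiHalf_act eqPhi PhiHalf_act.
Qed.

Definition tens_iota (n m : nat) (y0 : 'I_n) : tens n m :=
  [ffun k : 'I_m => insubd y0 (val k)].

Lemma codom_tens_iota (n m : nat) (y0 x : 'I_n) :
  (x < m) -> x \in codom (tens_iota m y0).
Proof.
move=> ltxm; apply/codomP; exists (Ordinal ltxm).
by apply: val_inj; rewrite ffunE val_insubd /= ltn_ord.
Qed.

Lemma ltn_neq_vlast (n : nat) (hn : 0 < n) (x : 'I_n) :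
  x != vlast hn -> (x < n.-1).
Proof. by move=> nx; have : nat_of_ord x != n.-1 := nx; have := ltn_ord x; lia. Qed.

Theorem corollary4p13 (R : pzRingType) (n r : nat) (hn : (0 < n)%N) (hr : (0 < r)%N) :
  ((n - 1 <= r)%N ->
     forall a b : {ffun {perm 'I_n} -> R}, Phi r a = Phi r b -> a = b) /\
  ((n - 2 <= r)%N ->
     forall a b : {ffun {perm 'I_n} -> R}, in_kWn1 hn a -> in_kWn1 hn b ->
       PhiHalf r hn a = PhiHalf r hn b -> a = b).
Proof.
pose J := tens_iota r (vlast hn).
split=> [hr1 a b | hr2 a b].
  apply: (Phi_inj_cover (J := J) (y := vlast hn)) => x /ltn_neq_vlast ltx.
  by apply: codom_tens_iota; lia.
have lt_n2 : n - 2 < n by rewrite ltn_subrL hn.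
apply: (PhiHalf_inj_cover (J := J) (y := Ordinal lt_n2)) => x nx2.
apply/codom_ext/predU1P.
have [->|/ltn_neq_vlast ltx] := eqVneq x (vlast hn); [by left | right].
have : nat_of_ord x != n - 2 := nx2.
by move=> ?; apply: codom_tens_iota; lia.
Qed.
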